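(* Let $E$ be a nonzero real Banach space, $f_0\colon E\times E^*\to\,]{-}\infty,\infty]$ proper, convex and lower semicontinuous, $z^{**}\in E^{**}$ with $f_0^{**}(z^{**},0)\le0$, and $z^*\in E^*$. Then for all $n\in\mathbb N$ there exists $(x_n,x_n^* )\in E\times E^*$ such that $f_0(x_n,x_n^* )\le1/n^2$, $\|x_n\|\le\|z^{**}\|+1/n^2$, $\|x_n^*\|\le1/n^2$ and $|\langle x_n,z^*\rangle-\langle z^*,z^{**}\rangle|\le1/n^2$.
   Context: $(E\times E^* )^*$ is identified with $E^*\times E^{**}$ via $\langle (x,x^* ),(y^*,y^{**})\rangle=\langle x,y^*\rangle+\langle x^*,y^{**}\rangle$, so $(E\times E^* )^{**}$ is identified with $E^{**}\times E^{***}$; $f_0^*$ is the Fenchel conjugate on $E^*\times E^{**}$ and $f_0^{**}(x^{**},x^{***})=\sup_{(y^*,y^{**})}[\langle y^*,x^{**}\rangle+\langle y^{**},x^{***}\rangle-f_0^*(y^*,y^{**})]$. *)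

From HB Require Import structures.
From mathcomp Require Import all_boot all_order all_algebra.
From mathcomp Require Import all_classical all_reals all_analysis.
Set Implicit Arguments. Unset Strict Implicit. Unset Printing Implicit Defensive.
Import Order.TTheory GRing.Theory Num.Theory.
Import numFieldNormedType.Exports.
Local Open Scope classical_set_scope.
Local Open Scope ring_scope.

Section Duality.
Variables (R : realType) (E : normedModType R).

Definition is_dual (phi : E -> R) : Prop :=
  (forall (a : R) (x y : E), phi (a *: x + y) = a * phi x + phi y) /\ continuous phi.

Definition dnorm (phi : E -> R) : R :=
  sup [set `|phi x| | x in [set x : E | `|x| <= 1]].

Definition is_bidual (z : (E -> R) -> R) : Prop :=
  (forall (a : R) (phi psi : E -> R), is_dual phi -> is_dual psi ->
      z (fun x => a * phi x + psi x) = a * z phi + z psi) /\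
  exists M : R, forall phi, is_dual phi -> `|z phi| <= M * dnorm phi.

Definition bnorm (z : (E -> R) -> R) : R :=
  sup [set `|z phi| | phi in [set phi | is_dual phi /\ dnorm phi <= 1]].

(* f : E x E^* -> ]-oo, +oo] ; only its values on E x E^* matter  *)
Definition proper_fun (f : E -> (E -> R) -> \bar R) : Prop :=
  (forall x phi, is_dual phi -> f x phi != -oo%E) /\
  (exists x phi, is_dual phi /\ f x phi != +oo%E).

Definition convex_fun (f : E -> (E -> R) -> \bar R) : Prop :=
  forall (x : E) phi (y : E) psi (t : R), is_dual phi -> is_dual psi -> 0 <= t <= 1 ->
    (f (t *: x + (1 - t) *: y)%R (fun u => t * phi u + (1 - t) * psi u)%R
       <= t%:E * f x phi + (1 - t)%:E * f y psi)%E.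

Definition lsc_fun (f : E -> (E -> R) -> \bar R) : Prop :=
  forall (x : E) phi, is_dual phi -> forall r : R, (r%:E < f x phi)%E ->
    exists2 d : R, 0 < d & forall (y : E) psi, is_dual psi ->
      `|y - x| < d -> dnorm (fun u => psi u - phi u) < d -> (r%:E < f y psi)%E.

Definition fconj (f : E -> (E -> R) -> \bar R) (ys : E -> R) (yss : (E -> R) -> R)
  : \bar R :=
  ereal_sup [set v | exists x phi, is_dual phi /\
                       v = ((ys x + yss phi)%:E - f x phi)%E].

Definition fbiconj (f : E -> (E -> R) -> \bar R) (xss : (E -> R) -> R)
  (xsss : ((E -> R) -> R) -> R) : \bar R :=
  ereal_sup [set v | exists ys yss, is_dual ys /\ is_bidual yss /\
                       v = ((xss ys + xsss yss)%:E - fconj f ys yss)%E].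

End Duality.

From HB Require Import structures.
From mathcomp Require Import all_boot all_order all_algebra.
From mathcomp Require Import all_classical all_reals all_analysis.
From mathcomp Require Import ring lra.
Import Order.TTheory GRing.Theory Num.Theory.
Import numFieldNormedType.Exports.
Local Open Scope classical_set_scope.
Local Open Scope ring_scope.

(* Suppose no (x, x^* ) in E x E^* satisfies the four estimates.  Then the
   set of (x, x^*, r, <x, z^*> - <z^*, z^**>) with f0(x, x^* ) <= r misses an
   open box around the origin of E x E^* x R x R, and Hahn-Banach separation
   (for a convex, not necessarily sublinear, majorant) gives a closed
   halfspace <x, -u - g z^*> + <x^*, -v> - b r <= -1 - g <z^*, z^**>
   containing the graph of f0, with ||u|| <= 1 / (||z^**|| + e).  The same
   separation around a point below the epigraph, where lower semicontinuity
   leaves room for a box, gives a non-vertical halfspace, i.e. a continuous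
   affine minorant of f0.  Adding T times the first halfspace to the second
   and letting T grow, f0^**(z^**, 0) <= 0 forces <u, z^**> >= 1, whereas
   <u, z^**> <= ||z^**|| ||u|| < 1. *)

Lemma slope_ge0 {R : realFieldType} (a b : R) :
  (forall t, 0 <= t -> 0 <= a + t * b) -> 0 <= b.
Proof.
move=> ray; rewrite leNgt; apply/negP => b_lt0.
have nb_gt0 : 0 < - b by rewrite oppr_gt0.
have := ray ((`|a| + 1) / - b) (divr_ge0 (addr_ge0 (normr_ge0 a) ler01) (ltW nb_gt0)).
have -> : (`|a| + 1) / - b * b = - (`|a| + 1) by field; rewrite -oppr_eq0 lt0r_neq0.
have := ler_norm a; lra.
Qed.

Lemma fct_scalerE {T : Type} {R : numFieldType} (a : R) (g : T -> R) x :
  (a *: g) x = a * g x.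
Proof. by []. Qed.

Lemma fct_addE {T : Type} {R : nmodType} (g h : T -> R) x : (g + h) x = g x + h x.
Proof. by []. Qed.

Section Subspace.
Context {R : realType} {V : lmodType R}.
Variable S : set V.
Hypotheses (S0 : S 0) (S_lin : forall a v w, S v -> S w -> S (a *: v + w)).

Lemma subspaceZ a {v} : S v -> S (a *: v).
Proof. by move=> Sv; rewrite -[_ *: _]addr0; apply: S_lin. Qed.

Lemma subspaceD {v w} : S v -> S w -> S (v + w).
Proof. by move=> Sv Sw; rewrite -[v]scale1r; apply: S_lin. Qed.

Lemma subspaceB {v w} : S v -> S w -> S (v - w).
Proof. by move=> Sv Sw; rewrite -scaleN1r addrC; apply: S_lin. Qed.

Definition linear_on (L : V -> R) :=
  forall a v w, S v -> S w -> L (a *: v + w) = a * L v + L w.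

Lemma linear_on0 L : linear_on L -> L 0 = 0.
Proof. by move=> L_lin; have := L_lin 1 0 0 S0 S0; rewrite scale1r addr0 mul1r; lra. Qed.

Lemma linear_onZ L a v : linear_on L -> S v -> L (a *: v) = a * L v.
Proof.
by move=> L_lin Sv; have := L_lin a v 0 Sv S0; rewrite !addr0 linear_on0 ?addr0.
Qed.

Section ConvexHahnBanach.
Variable P : V -> R.
Hypothesis P_convex : forall v w t, S v -> S w -> 0 <= t <= 1 ->
  P (t *: v + (1 - t) *: w) <= t * P v + (1 - t) * P w.
Hypothesis P0_ge0 : 0 <= P 0.

Definition minorant_graph (G : set (V * R)) : Prop :=
  [/\ forall v a b, G (v, a) -> G (v, b) -> a = b,
      forall v a w b t, G (v, a) -> G (w, b) -> G (t *: v + w, t * a + b) &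
      forall v a, G (v, a) -> S v /\ a <= P v].

Lemma minorant_graph_bigcup (F : set (set (V * R))) :
  F `<=` minorant_graph -> total_on F subset ->
  minorant_graph (\bigcup_(G in F) G).
Proof.
move=> F_graph F_total; split.
- move=> v a b [X FX Xa] [Y FY Yb].
  have [XY|YX] := F_total X Y FX FY.
  + by have [G_fun _ _] := F_graph Y FY; exact: G_fun (XY _ Xa) Yb.
  + by have [G_fun _ _] := F_graph X FX; exact: G_fun Xa (YX _ Yb).
- move=> v a w b t [X FX Xa] [Y FY Yb].
  have [XY|YX] := F_total X Y FX FY.
  + by exists Y => //; have [_ G_lin _] := F_graph Y FY; exact: G_lin (XY _ Xa) Yb.
  + by exists X => //; have [_ G_lin _] := F_graph X FX; exact: G_lin Xa (YX _ Yb).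
- by move=> v a [X FX Xa]; have [_ _ G_le] := F_graph X FX; exact: G_le.
Qed.

Lemma minorant_graph0 {G v a} : minorant_graph G -> G (v, a) -> G (0, 0).
Proof.
by case=> _ G_lin _ Gva; have := G_lin _ _ _ _ (-1) Gva Gva; rewrite scaleN1r mulN1r !addNr.
Qed.

Lemma minorant_graphZ {G v a} t : minorant_graph G -> G (v, a) -> G (t *: v, t * a).
Proof.
move=> G_graph Gva; have [_ G_lin _] := G_graph.
by have := G_lin _ _ _ _ t Gva (minorant_graph0 G_graph Gva); rewrite !addr0.
Qed.

Lemma minorant_graph_gap {G} y {m g m' g' s t} :
  minorant_graph G -> S y -> G (m, g) -> G (m', g') -> 0 < s -> 0 < t ->
  t * g' + s * g <= t * P (m' - s *: y) + s * P (m + t *: y).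
Proof.
move=> G_graph Sy Gm Gm' s_gt0 t_gt0; have [_ G_lin G_le] := G_graph.
have st_neq0 : s + t != 0 by rewrite lt0r_neq0 ?addr_gt0.
pose l := t / (s + t).
have l01 : 0 <= l <= 1.
  apply/andP; split; first by rewrite divr_ge0 // ltW // addr_gt0.
  by rewrite ler_pdivrMr ?addr_gt0 // mul1r lerDr ltW.
have [Sm' _] := G_le _ _ Gm'; have [Sm _] := G_le _ _ Gm.
have [_] := G_le _ _ (G_lin _ _ _ _ l Gm' (minorant_graphZ (1 - l) G_graph Gm)).
have -> : l *: m' + (1 - l) *: m = l *: (m' - s *: y) + (1 - l) *: (m + t *: y).
  rewrite scalerBr scalerDr !scalerA.
  have -> : (1 - l) * t = l * s by rewrite /l; field.
  by rewrite addrACA addNr addr0.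
move=> /le_trans /(_ (P_convex _ _ _ (subspaceB Sm' (subspaceZ s Sy))
                              (subspaceD Sm (subspaceZ t Sy)) l01)).
have scale_back a b : (s + t) * (l * a + (1 - l) * b) = t * a + s * b.
  by rewrite /l; field.
by rewrite -!scale_back; apply: ler_wpM2l; rewrite addr_ge0 ?ltW.
Qed.
Lemma minorant_graph_slope {G y} : minorant_graph G -> G (0, 0) -> S y ->
  exists c, forall m g t, G (m, g) -> g + t * c <= P (m + t *: y).
Proof.
move=> G_graph G00 Sy; have [_ _ G_le] := G_graph.
pose C := [set x | exists m g s, [/\ G (m, g), 0 < s & x = (g - P (m - s *: y)) / s]].
have gap m g m' g' s t : G (m, g) -> G (m', g') -> 0 < s -> 0 < t ->
    (g' - P (m' - s *: y)) / s <= (P (m + t *: y) - g) / t.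
  move=> Gm Gm' s_gt0 t_gt0; rewrite ler_pdivrMr // mulrAC ler_pdivlMr //.
  by have := minorant_graph_gap y G_graph Sy Gm Gm' s_gt0 t_gt0; lra.
have C_ne : C !=set0 by exists ((0 - P (0 - 1 *: y)) / 1), 0, 0, 1.
have C_sup : has_sup C.
  split => //; exists ((P (0 + 1 *: y) - 0) / 1) => _ [m' [g' [s [Gm' s_gt0 ->]]]].
  exact: gap.
exists (sup C) => m g t Gm.
have [t_lt0|t_gt0|->] := ltgtP t 0; last first.
- by rewrite mul0r scale0r !addr0; exact: (G_le _ _ Gm).2.
- have : sup C <= (P (m + t *: y) - g) / t.
    by apply: ge_sup => // _ [m' [g' [s [Gm' s_gt0 ->]]]]; exact: gap.
  by rewrite ler_pdivlMr //; nra.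
- have : (g - P (m - (- t) *: y)) / (- t) <= sup C.
    by apply: sup_upper_bound => //; exists m, g, (- t); rewrite oppr_gt0.
  by rewrite scaleNr opprK ler_pdivrMr ?oppr_gt0 //; nra.
Qed.

Lemma minorant_graph_extend {G y c} : minorant_graph G -> S y ->
  ~ (exists a, G (y, a)) -> (forall m g t, G (m, g) -> g + t * c <= P (m + t *: y)) ->
  minorant_graph [set z | exists m g t, G (m, g) /\ z = (m + t *: y, g + t * c)].
Proof.
move=> G_graph Sy Gy c_ok; have [G_fun G_lin G_le] := G_graph; split.
- move=> v a b [m [g [t [Gm [-> ->]]]]] [m' [g' [t' [Gm' []]]]] Emm' ->.
  have [tt'|tt'] := eqVneq t t'.
    rewrite tt' in Emm' *; move/addIr: Emm' => Emm'.
    by rewrite Emm' in Gm; rewrite (G_fun _ _ _ Gm Gm').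
  exfalso; apply: Gy; exists ((t - t')^-1 * (-1 * g + g')).
  have -> : y = (t - t')^-1 *: (-1 *: m + m').
    rewrite scaleN1r (addrC (- m)); have -> : m' - m = (t - t') *: y.
      by apply/eqP; rewrite subr_eq scalerBl addrC addrA Emm' addrK.
    by rewrite scalerA mulVf ?scale1r // subr_eq0.
  exact/minorant_graphZ/G_lin.
- move=> v a w b r [m [g [t [Gm [-> ->]]]]] [m' [g' [t' [Gm' [-> ->]]]]].
  exists (r *: m + m'), (r * g + g'), (r * t + t'); split; first exact: G_lin.
  congr pair; last by ring.
  by rewrite scalerDr scalerA scalerDl !addrA; congr (_ + _); rewrite addrAC.
- move=> v a [m [g [t [Gm [-> ->]]]]]; split; last exact: c_ok.
  exact: subspaceD (G_le _ _ Gm).1 (subspaceZ t Sy).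
Qed.

Lemma convex_linear_minorant :
  exists L, linear_on L /\ forall v, S v -> L v <= P v.
Proof.
have [A [A_graph A_max]] := Zorn_bigcup minorant_graph_bigcup.
have A00 : A (0, 0).
  have [[[v a] Ava]|A_empty] := pselect (exists z, A z).
    exact: minorant_graph0 A_graph Ava.
  exfalso; apply: (A_max [set (0, 0)]).
    split=> [z Az|]; first by exfalso; apply: A_empty; exists z.
    by move=> /(_ (0, 0) erefl) A00; apply: A_empty; exists (0, 0).
  split=> [v a b [_ ->] [_ ->] // | v a w b t [-> ->] [-> ->] | v a [-> ->] //].
  by rewrite scaler0 addr0 mulr0 addr0.
have [A_fun A_lin A_le] := A_graph.
have A_total y : S y -> exists a, A (y, a).
  move=> Sy; apply: contrapT => Ay.
  have [c c_ok] := minorant_graph_slope A_graph A00 Sy.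
  apply: (A_max _ _ (minorant_graph_extend A_graph Sy Ay c_ok)); split.
    by move=> [m g] Am; exists m, g, 0; rewrite scale0r mul0r !addr0.
  move=> /(_ (y, c)) yc; apply: Ay; exists c; apply: yc; exists 0, 0, 1.
  by rewrite scale1r mul1r !add0r.
pose L v := xget 0 [set a | A (v, a)].
have AL v : S v -> A (v, L v) by move=> /A_total; exact: xgetPex.
exists L; split => [a v w Sv Sw | v /AL /A_le[]//].
exact: A_fun _ _ _ (AL _ (S_lin a _ _ Sv Sw)) (A_lin _ _ _ _ a (AL _ Sv) (AL _ Sw)).
Qed.

End ConvexHahnBanach.
Section SeminormSeparation.
Variables (N : V -> R) (K : set V).
Hypothesis N_ge0 : forall {v}, S v -> 0 <= N v.
Hypothesis NZ : forall a {v}, S v -> N (a *: v) <= `|a| * N v.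
Hypothesis ND : forall {v w}, S v -> S w -> N (v + w) <= N v + N w.
Hypothesis KS : K `<=` S.
Hypothesis K_convex : forall a b t, K a -> K b -> 0 <= t <= 1 ->
  K (t *: a + (1 - t) *: b).
Hypothesis K_ne : K !=set0.
Hypothesis KN : forall a, K a -> 1 <= N a.

Let distK v := inf [set N (v + a) | a in K].

Let distK_ne v : [set N (v + a) | a in K] !=set0.
Proof. by case: K_ne => a Ka; exists (N (v + a)), a. Qed.

Let distK_le {v a} : S v -> K a -> distK v <= N (v + a).
Proof.
move=> Sv Ka; apply: ge_inf; last by exists a.
by exists 0 => _ [b Kb <-]; apply/N_ge0/subspaceD/KS.
Qed.

Let distK_convex {v w t} : S v -> S w -> 0 <= t <= 1 ->
  distK (t *: v + (1 - t) *: w) <= t * distK v + (1 - t) * distK w.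
Proof.
move=> Sv Sw t01; have /andP[t_ge0 t_le1] := t01; apply/ler_addgt0Pr => e e_gt0.
have /(inf_lt (distK_ne v))[_ [a Ka <-] Na] : distK v < distK v + e by rewrite ltrDl.
have /(inf_lt (distK_ne w))[_ [b Kb <-] Nb] : distK w < distK w + e by rewrite ltrDl.
have [Sva Swb] := (subspaceD Sv (KS _ Ka), subspaceD Sw (KS _ Kb)).
have Sconv := subspaceD (subspaceZ t Sv) (subspaceZ (1 - t) Sw).
apply: (le_trans (distK_le Sconv (K_convex _ _ _ Ka Kb t01))).
rewrite addrACA -!scalerDr.
apply: (le_trans (ND (subspaceZ t Sva) (subspaceZ (1 - t) Swb))).
have t'_ge0 : 0 <= 1 - t by rewrite subr_ge0.
have := NZ t Sva; have := NZ (1 - t) Swb; rewrite !ger0_norm //.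
have := ler_wpM2l t_ge0 (ltW Na); have := ler_wpM2l t'_ge0 (ltW Nb).
lra.
Qed.

Lemma seminorm_separation : exists L, [/\ linear_on L,
  forall v, S v -> `|L v| <= N v & forall a, K a -> 1 <= L a].
Proof.
have N0 : N 0 = 0.
  by apply/eqP; rewrite eq_le N_ge0 // andbT; have := NZ 0 S0; rewrite scale0r normr0 mul0r.
have P0_ge0 : 0 <= distK 0 - 1.
  rewrite subr_ge0; apply: lb_le_inf => // _ [a Ka <-]; rewrite add0r; exact: KN.
have P_convex v w t : S v -> S w -> 0 <= t <= 1 ->
    distK (t *: v + (1 - t) *: w) - 1 <= t * (distK v - 1) + (1 - t) * (distK w - 1).
  by move=> Sv Sw t01; have := distK_convex Sv Sw t01; lra.
have [L [L_lin L_le]] := convex_linear_minorant (fun v => distK v - 1) P_convex P0_ge0.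
have L_le_N v : S v -> L v <= N v.
  move=> Sv; case: K_ne => a0 Ka0; rewrite -subr_ge0; apply: (slope_ge0 (N a0 - 1)).
  move=> k k_ge0; have Skv := subspaceZ k Sv.
  have := L_le _ Skv; rewrite linear_onZ //.
  have := distK_le Skv Ka0; have := ND Skv (KS _ Ka0); have := NZ k Sv.
  rewrite ger0_norm //; lra.
exists L; split => // [v Sv | a Ka].
  rewrite ler_norml L_le_N // andbT lerNl -mulN1r -linear_onZ //.
  apply: (le_trans (L_le_N _ (subspaceZ _ Sv))).
  by apply: (le_trans (NZ _ Sv)); rewrite normrN normr1 mul1r.
have Sa := KS _ Ka.
have := L_le _ (subspaceZ (-1) Sa); rewrite linear_onZ // scaleN1r.
have := distK_le (subspaceZ (-1) Sa) Ka; rewrite scaleN1r addNr N0; lra.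
Qed.

End SeminormSeparation.
End Subspace.

Section Duality.
Context {R : realType} {E : normedModType R}.
Implicit Types (phi psi : E -> R) (x y : E) (z : (E -> R) -> R).

Lemma dual0 {phi} : is_dual phi -> phi 0 = 0.
Proof. by case=> phi_lin _; have := phi_lin 1 0 0; rewrite scale1r addr0 mul1r; lra. Qed.

Lemma dualZ {phi} a x : is_dual phi -> phi (a *: x) = a * phi x.
Proof. by move=> phi_dual; have := phi_dual.1 a x 0; rewrite addr0 dual0 // addr0. Qed.

Lemma dualB {phi} x y : is_dual phi -> phi (x - y) = phi x - phi y.
Proof.
by move=> [phi_lin _]; have := phi_lin (-1) y x; rewrite scaleN1r mulN1r addrC => ->; ring.
Qed.

Lemma bounded_linear_is_dual phi k :
  (forall a x y, phi (a *: x + y) = a * phi x + phi y) ->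
  (forall x, `|phi x| <= k * `|x|) -> is_dual phi.
Proof.
move=> phi_lin phi_bd; split => // x.
have phiB y : phi (x - y) = phi x - phi y.
  by have := phi_lin (-1) y x; rewrite scaleN1r mulN1r addrC => ->; ring.
have k1_gt0 : 0 < `|k| + 1 by rewrite ltr_wpDl.
apply/cvgrPdist_lt => e e_gt0; apply/nbhs_normP.
exists (e / (`|k| + 1)) => [|y /= xy]; first by rewrite /= divr_gt0.
rewrite -phiB; apply: le_lt_trans (phi_bd _) _.
rewrite ltr_pdivlMr // in xy.
have : k * `|x - y| <= (`|k| + 1) * `|x - y|.
  by rewrite ler_wpM2r // (le_trans (ler_norm k)) // lerDl.
nra.
Qed.

Lemma dual_bounded {phi} : is_dual phi ->
  exists2 M, 0 < M & forall x, `|phi x| <= M * `|x|.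
Proof.
move=> phi_dual; have := phi_dual.2 0; move/cvgrPdist_lt => /(_ 1 ltr01).
move=> /nbhs_norm0P [d /= d_gt0 phi_d]; exists (2 / d); first by rewrite divr_gt0.
move=> x; have [->|x_neq0] := eqVneq x 0; first by rewrite dual0 // !normr0 mulr0.
have x_gt0 : 0 < `|x| by rewrite normr_gt0.
pose l := d / (2 * `|x|).
have l_gt0 : 0 < l by rewrite divr_gt0 // mulr_gt0.
have lx_lt : `|l *: x| < d.
  rewrite normrZ gtr0_norm // /l.
  have -> : d / (2 * `|x|) * `|x| = d / 2 by field; rewrite lt0r_neq0.
  by rewrite gtr_pMr // invf_lt1 // ltr1n.
have := phi_d _ lx_lt; rewrite /= dual0 // sub0r normrN dualZ // normrM gtr0_norm //.
rewrite /l mulrAC ltr_pdivrMr ?mulr_gt0 // mul1r => lt.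
by rewrite mulrAC ler_pdivlMr // mulrC ltW.
Qed.

Lemma is_dual0 : is_dual (0 : E -> R).
Proof. by apply: (@bounded_linear_is_dual _ 0) => [a x y|x]; rewrite ?normr0 ?mul0r //= mulr0 addr0. Qed.

Lemma is_dual_comb a {phi psi} : is_dual phi -> is_dual psi -> is_dual (a *: phi + psi).
Proof.
move=> phi_dual psi_dual.
have [M M_gt0 phi_bd] := dual_bounded phi_dual.
have [N N_gt0 psi_bd] := dual_bounded psi_dual.
apply: (@bounded_linear_is_dual _ (`|a| * M + N)) => [b x y|x] /=.
  by rewrite !fct_addE !fct_scalerE phi_dual.1 psi_dual.1; ring.
rewrite (le_trans (ler_normD _ _)) // normrM mulrDl -mulrA lerD // ler_wpM2l //.
Qed.

Lemma is_dualZ a {phi} : is_dual phi -> is_dual (a *: phi).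
Proof. by move=> phi_dual; rewrite -[_ *: _]addr0; exact: is_dual_comb is_dual0. Qed.


Lemma is_dualB {phi psi} : is_dual phi -> is_dual psi -> is_dual (phi - psi).
Proof. by move=> phi_dual psi_dual; rewrite addrC -scaleN1r; exact: is_dual_comb. Qed.

Lemma dnorm_ub {phi} x : is_dual phi -> `|x| <= 1 -> `|phi x| <= dnorm phi.
Proof.
move=> phi_dual x1; apply: sup_upper_bound; last by exists x.
split; first by exists `|phi x|, x.
have [M M_gt0 phi_bd] := dual_bounded phi_dual.
exists M => _ [y /= y1 <-]; apply: le_trans (phi_bd y) _.
by rewrite ler_piMr // ltW.
Qed.

Lemma dnorm_ge0 {phi} : is_dual phi -> 0 <= dnorm phi.
Proof. by move=> phi_dual; apply: le_trans (dnorm_ub 0 phi_dual _); rewrite ?normr0. Qed.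

Lemma dnorm_le phi k : (forall x, `|x| <= 1 -> `|phi x| <= k) -> dnorm phi <= k.
Proof.
move=> phi_bd; apply: ge_sup => [|_ [x x1 <-]]; last exact: phi_bd.
by exists `|phi 0|, 0 => //=; rewrite normr0.
Qed.

Lemma dnorm0 : dnorm (0 : E -> R) = 0.
Proof.
apply/eqP; rewrite eq_le dnorm_ge0 ?andbT; last exact: is_dual0.
by apply: dnorm_le => x _; rewrite normr0.
Qed.

Lemma dnormZ a {phi} : is_dual phi -> dnorm (a *: phi) <= `|a| * dnorm phi.
Proof. by move=> phi_dual; apply: dnorm_le => x x1; rewrite normrM ler_wpM2l ?dnorm_ub. Qed.

Lemma dnormD {phi psi} : is_dual phi -> is_dual psi ->
  dnorm (phi + psi) <= dnorm phi + dnorm psi.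
Proof.
move=> phi_dual psi_dual; apply: dnorm_le => x x1.
by rewrite (le_trans (ler_normD _ _)) // lerD // dnorm_ub.
Qed.

Lemma bidual_comb {z} a {phi psi} : is_bidual z -> is_dual phi -> is_dual psi ->
  z (a *: phi + psi) = a * z phi + z psi.
Proof. by move=> z_bidual; exact: z_bidual.1. Qed.

Lemma bidual0 {z} : is_bidual z -> z 0 = 0.
Proof.
move=> z_bidual; have := bidual_comb 1 z_bidual is_dual0 is_dual0.
by rewrite scaler0 addr0 mul1r; lra.
Qed.

Lemma bidualZ {z} a {phi} : is_bidual z -> is_dual phi -> z (a *: phi) = a * z phi.
Proof.
move=> z_bidual phi_dual; have := bidual_comb a z_bidual phi_dual is_dual0.
by rewrite !addr0 bidual0 // addr0.
Qed.

Lemma is_bidual_comb a {z1 z2} : is_bidual z1 -> is_bidual z2 -> is_bidual (a *: z1 + z2).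
Proof.
move=> [z1_lin [M1 z1_bd]] [z2_lin [M2 z2_bd]]; split.
  move=> b phi psi phi_dual psi_dual; rewrite !fctE z1_lin ?z2_lin //.
  by rewrite /GRing.scale /=; ring.
exists (`|a| * M1 + M2) => phi phi_dual; rewrite !fctE mulrDl -mulrA.
by rewrite (le_trans (ler_normD _ _)) // normrM lerD ?ler_wpM2l ?z1_bd ?z2_bd.
Qed.

Lemma is_bidualZ a {z} : is_bidual z -> is_bidual (a *: z).
Proof.
move=> [z_lin [M z_bd]]; split=> [b phi psi phi_dual psi_dual|].
  by rewrite !fct_scalerE z_lin //; ring.
exists (`|a| * M) => phi phi_dual; rewrite fct_scalerE normrM -mulrA ler_wpM2l //.
exact: z_bd.
Qed.

Lemma bidualB {z phi psi} : is_bidual z -> is_dual phi -> is_dual psi ->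
  z (phi - psi) = z phi - z psi.
Proof.
move=> z_bidual phi_dual psi_dual; rewrite (addrC phi) -scaleN1r bidual_comb //.
by rewrite mulN1r addrC.
Qed.

Lemma bnorm_ub {z phi} : is_bidual z -> is_dual phi -> dnorm phi <= 1 ->
  `|z phi| <= bnorm z.
Proof.
move=> [_ [M z_bd]] phi_dual phi1; apply: sup_upper_bound; last by exists phi.
split; first by exists `|z phi|, phi.
exists `|M| => _ [psi [psi_dual psi1] <-]; apply: le_trans (z_bd _ psi_dual) _.
rewrite (le_trans (ler_norm _)) // normrM (ger0_norm (dnorm_ge0 psi_dual)).
by rewrite ler_piMr.
Qed.

Lemma bnorm_ge0 {z} : is_bidual z -> 0 <= bnorm z.
Proof.
move=> z_bidual; apply: le_trans (bnorm_ub z_bidual is_dual0 _); rewrite ?dnorm0 //.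
Qed.

Lemma bnorm_bound {z phi} : is_bidual z -> is_dual phi ->
  `|z phi| <= bnorm z * dnorm phi.
Proof.
move=> z_bidual phi_dual; have [_ [M z_bd]] := z_bidual.
have [phi0|phi_neq0] := eqVneq (dnorm phi) 0.
  by have := z_bd _ phi_dual; rewrite phi0 !mulr0.
have phi_gt0 : 0 < dnorm phi by rewrite lt0r phi_neq0 dnorm_ge0.
have psi_dual := is_dualZ (dnorm phi)^-1 phi_dual.
have psi1 : dnorm ((dnorm phi)^-1 *: phi) <= 1.
  by rewrite (le_trans (dnormZ _ phi_dual)) // ger0_norm ?invr_ge0 ?mulVf // ltW.
have := bnorm_ub z_bidual psi_dual psi1.
by rewrite bidualZ // normrM ger0_norm ?invr_ge0 1?mulrC ?ler_pdivrMr // ltW.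
Qed.

End Duality.

Lemma proper_fun_finite {R : realType} {E : normedModType R} {f : E -> (E -> R) -> \bar R} :
  proper_fun f -> exists x phi a, is_dual phi /\ f x phi = a%:E.
Proof.
move=> [f_gtNy [x [phi [phi_dual f_lty]]]]; have := f_gtNy x phi phi_dual.
by case fa : (f x phi) f_lty => [a| |] // _ _; exists x, phi, a.
Qed.

Section EpigraphBoxSeparation.
Context {R : realType} {E : normedModType R}.
Local Notation V := (E * (E -> R) * R^o * R^o)%type.

Let tupleD (p q : V) : p + q =
  (p.1.1.1 + q.1.1.1, p.1.1.2 + q.1.1.2, p.1.2 + q.1.2, p.2 + q.2).
Proof. by case: p q => [[[? ?] ?] ?] [[[? ?] ?] ?]. Qed.

Let tupleZ a (p : V) : a *: p = (a *: p.1.1.1, a *: p.1.1.2, a *: p.1.2, a *: p.2).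
Proof. by case: p => [[[? ?] ?] ?]. Qed.

Let dual_part : set V := [set p | is_dual p.1.1.2].

Let dual_part0 : dual_part 0. Proof. exact: is_dual0. Qed.

Let dual_part_lin a p q : dual_part p -> dual_part q -> dual_part (a *: p + q).
Proof. exact: is_dual_comb. Qed.

Let linear_on_tupleE L x phi r s : linear_on dual_part L -> is_dual phi ->
  L (x, phi, r, s) =
  L (x, 0, 0, 0) + L (0, phi, 0, 0) + L (0, 0, 1, 0) * r + L (0, 0, 0, 1) * s.
Proof.
move=> L_lin phi_dual.
have -> : ((x, phi, r, s) : V) = 1 *: (x, 0, 0, 0) +
    (1 *: (0, phi, 0, 0) + (r *: (0, 0, 1, 0) + (s *: (0, 0, 0, 1) + 0))).
  rewrite !tupleD !tupleZ /= !(scaler0, scale1r, addr0, add0r).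
  by congr (_, _, _, _); rewrite /GRing.scale /= mulr1.
rewrite !L_lin ?(linear_on0 _ dual_part0 _ L_lin) ?mul1r ?addr0 ?addrA ?(mulrC r) ?(mulrC s) //.
all: repeat apply: dual_part_lin; rewrite /dual_part /= ?scaler0 ?addr0 ?scale1r //.
all: exact: is_dual0.
Qed.

Context {k1 k2 k3 k4 : R}.
Hypotheses (k1_gt0 : 0 < k1) (k2_gt0 : 0 < k2) (k3_gt0 : 0 < k3) (k4_gt0 : 0 < k4).

Let box_norm (p : V) :=
  `|p.1.1.1| / k1 + dnorm p.1.1.2 / k2 + `|p.1.2| / k3 + `|p.2| / k4.

Let box_norm_ge0 p : dual_part p -> 0 <= box_norm p.
Proof.
move=> p_dual; rewrite /box_norm !addr_ge0 // divr_ge0 ?dnorm_ge0 //.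
all: by apply: ltW.
Qed.

Let box_normZ a p : dual_part p -> box_norm (a *: p) <= `|a| * box_norm p.
Proof.
move=> p_dual; rewrite tupleZ /box_norm /=.
rewrite !normrZ !mulrDr !mulrA !lerD // ler_pM2r ?invr_gt0 //.
exact: dnormZ.
Qed.

Let box_normD p q : dual_part p -> dual_part q ->
  box_norm (p + q) <= box_norm p + box_norm q.
Proof.
move=> p_dual q_dual; rewrite tupleD /box_norm /=.
have div_normD (W : normedModType R) k (a b : W) : 0 < k -> `|a + b| / k <= `|a| / k + `|b| / k.
  by move=> k_gt0; rewrite -mulrDl ler_pM2r ?invr_gt0 // ler_normD.
have := div_normD _ _ p.1.1.1 q.1.1.1 k1_gt0.
have := div_normD _ _ p.1.2 q.1.2 k3_gt0; have := div_normD _ _ p.2 q.2 k4_gt0.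
have : dnorm (p.1.1.2 + q.1.1.2) / k2 <= dnorm p.1.1.2 / k2 + dnorm q.1.1.2 / k2.
  by rewrite -mulrDl ler_pM2r ?invr_gt0 // dnormD.
lra.
Qed.

Context {f : E -> (E -> R) -> \bar R} {x0 : E} {phi0 zeta : E -> R} {r0 c : R}.
Hypotheses (f_proper : proper_fun f) (f_convex : convex_fun f).
Hypotheses (phi0_dual : is_dual phi0) (zeta_dual : is_dual zeta).
Hypothesis box_free : forall x phi r, is_dual phi -> (f x phi <= r%:E)%E ->
  `|x - x0| < k1 -> dnorm (phi - phi0) < k2 -> `|r - r0| < k3 ->
  `|zeta x - c| < k4 -> False.

Let shifted_epi : set V := [set p | exists x phi r, [/\ is_dual phi,
  (f x phi <= r%:E)%E & p = (x - x0, phi - phi0, r - r0, zeta x - c)]].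

Let shifted_epi_dual : shifted_epi `<=` dual_part.
Proof. by move=> _ [x [phi [r [phi_dual _ ->]]]]; exact: is_dualB. Qed.

Let shifted_epi_convex p q t : shifted_epi p -> shifted_epi q -> 0 <= t <= 1 ->
  shifted_epi (t *: p + (1 - t) *: q).
Proof.
move=> [x1 [phi1 [r1 [phi1_dual f1 ->]]]] [x2 [phi2 [r2 [phi2_dual f2 ->]]]] t01.
have /andP[t_ge0 t_le1] := t01.
exists (t *: x1 + (1 - t) *: x2), (t *: phi1 + (1 - t) *: phi2), (t * r1 + (1 - t) * r2).
split.
- exact/is_dual_comb/is_dualZ.
- apply: le_trans (f_convex _ _ _ _ _ phi1_dual phi2_dual t01) _.
  have -> : ((t * r1 + (1 - t) * r2)%:E = t%:E * r1%:E + (1 - t)%:E * r2%:E)%E.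
    by rewrite EFinD !EFinM.
  by rewrite leeD // lee_wpmul2l // lee_fin subr_ge0.
- rewrite tupleD !tupleZ /=; congr (_, _, _, _).
  + by rewrite !scalerBr addrACA -opprD -scalerDl subrKC scale1r.
  + by rewrite !scalerBr addrACA -opprD -scalerDl subrKC scale1r.
  + by rewrite /GRing.scale /=; ring.
  + by rewrite zeta_dual.1 (dualZ _ _ zeta_dual) /GRing.scale /=; ring.
Qed.

Let shifted_epi_ne : shifted_epi !=set0.
Proof.
have [x [phi [a [phi_dual fa]]]] := proper_fun_finite f_proper.
by exists (x - x0, phi - phi0, a - r0, zeta x - c), x, phi, a; rewrite fa.
Qed.

Let shifted_epi_box_norm p : shifted_epi p -> 1 <= box_norm p.
Proof.
move=> [x [phi [r [phi_dual fr ->]]]]; rewrite /box_norm /= leNgt; apply/negP => lt1.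
have part_ge0 (W : normedModType R) (w : W) k : 0 < k -> 0 <= `|w| / k.
  by move=> k_gt0; rewrite divr_ge0 // ltW.
have := part_ge0 _ (x - x0) _ k1_gt0; have := part_ge0 _ (r - r0) _ k3_gt0.
have := part_ge0 _ (zeta x - c) _ k4_gt0.
have : 0 <= dnorm (phi - phi0) / k2.
  by apply: divr_ge0; [exact/dnorm_ge0/is_dualB | exact: ltW].
move=> ? ? ? ?; apply: (box_free _ _ _ phi_dual fr).
all: by rewrite -[X in _ < X]mul1r -ltr_pdivrMr //; lra.
Qed.

Lemma epigraph_box_separation : exists u v (beta gam : R),
  [/\ is_dual u, dnorm u <= k1^-1, is_bidual v, 0 <= beta &
      forall x phi a, is_dual phi -> f x phi = a%:E ->
        1 <= u (x - x0) + v (phi - phi0) + beta * (a - r0) + gam * (zeta x - c)].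
Proof.
have [L [L_lin L_bd L_ge1]] := seminorm_separation _ dual_part0 dual_part_lin _ _
  box_norm_ge0 box_normZ box_normD shifted_epi_dual shifted_epi_convex
  shifted_epi_ne shifted_epi_box_norm.
pose u x := L (x, 0, 0, 0); pose v phi := L (0, phi, 0, 0).
pose beta := L (0, 0, 1, 0); pose gam := L (0, 0, 0, 1).
have u_lin a x y : u (a *: x + y) = a * u x + u y.
  rewrite /u -L_lin; try exact: is_dual0.
  by congr L; rewrite tupleD tupleZ /= !(scaler0, addr0).
have u_bd x : `|u x| <= `|x| / k1.
  have := L_bd (x, 0, 0, 0) is_dual0.
  by rewrite /box_norm /= dnorm0 normr0 !mul0r !addr0.
have u_dual : is_dual u.
  by apply: (bounded_linear_is_dual _ k1^-1 u_lin) => x; rewrite mulrC.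
have v_bidual : is_bidual v.
  split=> [a phi psi phi_dual psi_dual|].
    by rewrite /v -L_lin //; congr L; rewrite tupleD tupleZ /= !(scaler0, addr0).
  exists k2^-1 => phi phi_dual; rewrite mulrC.
  have := L_bd (0, phi, 0, 0) phi_dual.
  by rewrite /box_norm /= !normr0 !mul0r add0r !addr0.
have L_epi x phi r : is_dual phi -> (f x phi <= r%:E)%E ->
    1 <= u (x - x0) + v (phi - phi0) + beta * (r - r0) + gam * (zeta x - c).
  move=> phi_dual fr; rewrite /u /v /beta /gam -linear_on_tupleE //; last exact: is_dualB.
  by apply: L_ge1; exists x, phi, r.
exists u, v, beta, gam; split => //.
- apply: dnorm_le => x x1; apply: le_trans (u_bd x) _.
  by rewrite -[X in _ <= X]mul1r ler_pM2r ?invr_gt0.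
- have [x [phi [a [phi_dual fa]]]] := proper_fun_finite f_proper.
  apply: (slope_ge0 (u (x - x0) + v (phi - phi0) + beta * (a - r0) + gam * (zeta x - c) - 1)).
  move=> t t_ge0; have := L_epi x phi (a + t) phi_dual.
  by rewrite fa lee_fin lerDl => /(_ t_ge0); lra.
- by move=> x phi a phi_dual fa; apply: L_epi; rewrite // fa.
Qed.

End EpigraphBoxSeparation.

Section FenchelHalfspaces.
Context {R : realType} {E : normedModType R}.
Variable f : E -> (E -> R) -> \bar R.

(* For [beta > 0]: the continuous affine function
   (x, x^* ) |-> (<x, ys> + <x^*, yss> - B) / beta is a minorant of [f];
   for [beta = 0] the halfspace is vertical and only constrains the domain. *)
Definition epi_halfspace (ys : E -> R) (yss : (E -> R) -> R) (beta B : R) :=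
  forall x phi a, is_dual phi -> f x phi = a%:E -> ys x + yss phi - beta * a <= B.

Lemma epi_halfspace_comb {t ys1 yss1 b1 B1 ys2 yss2 b2 B2} : 0 <= t ->
  epi_halfspace ys1 yss1 b1 B1 -> epi_halfspace ys2 yss2 b2 B2 ->
  epi_halfspace (t *: ys1 + ys2) (t *: yss1 + yss2) (t * b1 + b2) (t * B1 + B2).
Proof.
move=> t_ge0 h1 h2 x phi a phi_dual fa; rewrite !fct_addE !fct_scalerE.
have := h2 _ _ _ phi_dual fa; have := ler_wpM2l t_ge0 (h1 _ _ _ phi_dual fa).
lra.
Qed.

Lemma epi_halfspaceZ {t ys yss b B} : 0 <= t -> epi_halfspace ys yss b B ->
  epi_halfspace (t *: ys) (t *: yss) (t * b) (t * B).
Proof.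
move=> t_ge0 h x phi a phi_dual fa; rewrite !fct_scalerE.
by have := ler_wpM2l t_ge0 (h _ _ _ phi_dual fa); lra.
Qed.

Hypothesis f_gtNy : forall x phi, is_dual phi -> f x phi != -oo%E.

Lemma fconj_le {ys yss B} : epi_halfspace ys yss 1 B -> (fconj f ys yss <= B%:E)%E.
Proof.
move=> h; apply: ge_ereal_sup => _ [x [phi [phi_dual ->]]].
have := f_gtNy x phi phi_dual; case fx : (f x phi) => [a| |] // _.
- by rewrite -EFinB lee_fin -[a]mul1r; exact: h.
- by rewrite addeNy leNye.
Qed.

Lemma fbiconj_le0_halfspace1 {zss ys yss B} : (fbiconj f zss (fun _ => 0%R) <= 0)%E ->
  is_dual ys -> is_bidual yss -> epi_halfspace ys yss 1 B -> zss ys <= B.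
Proof.
move=> f_biconj ys_dual yss_bidual /fconj_le.
have : ((zss ys + 0)%:E - fconj f ys yss <= 0)%E.
  by apply: le_trans f_biconj; apply: ereal_sup_ubound; exists ys, yss.
case: (fconj f ys yss) => [F| |] //=.
by rewrite addr0 -EFinB !lee_fin subr_le0 => /le_trans; apply.
Qed.

Lemma fbiconj_le0_halfspace {zss ys0 yss0 B0 ys yss beta B} :
  is_bidual zss -> (fbiconj f zss (fun _ => 0%R) <= 0)%E ->
  is_dual ys0 -> is_bidual yss0 -> epi_halfspace ys0 yss0 1 B0 ->
  is_dual ys -> is_bidual yss -> 0 <= beta -> epi_halfspace ys yss beta B ->
  zss ys <= B.
Proof.
move=> zss_bidual f_biconj ys0_dual yss0_bidual h0 ys_dual yss_bidual beta_ge0 h.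
rewrite -subr_ge0; apply: (slope_ge0 (B0 - zss ys0)) => T T_ge0.
have D_gt0 : 0 < T * beta + 1 by rewrite ltr_wpDl ?mulr_ge0.
have Dinv_ge0 : 0 <= (T * beta + 1)^-1 by rewrite invr_ge0 ltW.
have hD := epi_halfspaceZ Dinv_ge0 (epi_halfspace_comb T_ge0 h h0).
rewrite mulVf ?lt0r_neq0 // in hD.
have comb_dual := is_dual_comb T ys_dual ys0_dual.
have := fbiconj_le0_halfspace1 f_biconj (is_dualZ _ comb_dual)
  (is_bidualZ _ (is_bidual_comb T yss_bidual yss0_bidual)) hD.
rewrite (bidualZ _ zss_bidual comb_dual) (bidual_comb _ zss_bidual ys_dual ys0_dual).
by rewrite ler_pM2l ?invr_gt0 //; lra.
Qed.

End FenchelHalfspaces.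

Lemma lsc_epi_halfspace {R : realType} {E : normedModType R} {f : E -> (E -> R) -> \bar R} :
  proper_fun f -> convex_fun f -> lsc_fun f ->
  exists ys yss B, [/\ is_dual ys, is_bidual yss & epi_halfspace f ys yss 1 B].
Proof.
move=> f_proper f_convex f_lsc.
have [x0 [phi0 [a0 [phi0_dual fa0]]]] := proper_fun_finite f_proper.
have [d d_gt0 f_gt] : exists2 d : R, 0 < d & forall y psi, is_dual psi ->
    `|y - x0| < d -> dnorm (psi - phi0) < d -> ((a0 - 1)%:E < f y psi)%E.
  by apply: f_lsc => //; rewrite fa0 lte_fin gtrBl.
have box_free x phi r : is_dual phi -> (f x phi <= r%:E)%E -> `|x - x0| < d ->
    dnorm (phi - phi0) < d -> `|r - (a0 - 2)| < 1 -> `|(0 : E -> R) x - 0| < 1 -> False.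
  move=> phi_dual fr x_near phi_near r_near _.
  have := lt_le_trans (f_gt _ _ phi_dual x_near phi_near) fr.
  by rewrite lte_fin; have := ler_norm (r - (a0 - 2)); lra.
have [u [v [beta [gam [u_dual _ v_bidual _ sep]]]]] := epigraph_box_separation
  d_gt0 d_gt0 ltr01 ltr01 f_proper f_convex phi0_dual is_dual0 box_free.
have beta_gt0 : 0 < beta.
  have := sep _ _ _ phi0_dual fa0; rewrite !subrr dual0 // bidual0 //.
  by rewrite (_ : a0 - (a0 - 2) = 2) ?mulr0; [lra | ring].
exists ((- beta^-1) *: u), ((- beta^-1) *: v),
  (beta^-1 * (- 1 - u x0 - v phi0 - beta * (a0 - 2))); split.
- exact: is_dualZ.
- exact: is_bidualZ.
move=> x phi a phi_dual fa; rewrite !fct_scalerE.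
have := sep _ _ _ phi_dual fa; rewrite dualB // bidualB // /= subrr mulr0 addr0 => sep_xa.
have -> : - beta^-1 * u x + - beta^-1 * v phi - 1 * a =
    beta^-1 * (- u x - v phi - beta * a) by field; exact: lt0r_neq0.
by rewrite ler_pM2l ?invr_gt0 //; lra.
Qed.

Lemma bidual_lt1 {R : realType} {E : normedModType R} {z : (E -> R) -> R} {u : E -> R} {e : R} :
  is_bidual z -> is_dual u -> 0 < e -> dnorm u <= (bnorm z + e)^-1 -> z u < 1.
Proof.
move=> z_bidual u_dual e_gt0 u_norm; have z_ge0 := bnorm_ge0 z_bidual.
have ze_gt0 : 0 < bnorm z + e by rewrite ltr_wpDl.
apply: le_lt_trans (ler_norm _) _; apply: le_lt_trans (bnorm_bound z_bidual u_dual) _.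
apply: le_lt_trans (ler_wpM2l z_ge0 u_norm) _.
by rewrite ltr_pdivrMr // mul1r ltrDl.
Qed.

Theorem lemma7p2 (R : realType) (E : completeNormedModType R)
  (f0 : E -> (E -> R) -> \bar R) (zss : (E -> R) -> R) (zs : E -> R) :
  (exists x : E, x != 0) ->
  proper_fun f0 -> convex_fun f0 -> lsc_fun f0 ->
  is_bidual zss -> (fbiconj f0 zss (fun _ => 0%R) <= 0)%E ->
  is_dual zs ->
  forall n : nat, (0 < n)%N ->
    exists (x : E) (xs : E -> R), is_dual xs /\
      (f0 x xs <= (1 / (n%:R ^+ 2))%:E)%E /\
      `|x| <= bnorm zss + 1 / (n%:R ^+ 2) /\
      dnorm xs <= 1 / (n%:R ^+ 2) /\
      `|zs x - zss zs| <= 1 / (n%:R ^+ 2).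
Proof.
move=> _ f_proper f_convex f_lsc zss_bidual f_biconj zs_dual n n_gt0.
set eps := 1 / n%:R ^+ 2.
have eps_gt0 : 0 < eps by rewrite divr_gt0 // exprn_gt0 // ltr0n.
have Keps_gt0 : 0 < bnorm zss + eps by rewrite ltr_wpDl ?bnorm_ge0.
apply: contrapT => no_point.
have box_free x phi r : is_dual phi -> (f0 x phi <= r%:E)%E -> `|x - 0| < bnorm zss + eps ->
    dnorm (phi - 0) < eps -> `|r - 0| < eps -> `|zs x - zss zs| < eps -> False.
  rewrite !subr0 => phi_dual fr x_near phi_near r_near zs_near.
  apply: no_point; exists x, phi; do !split => //; try exact: ltW.
  by apply: le_trans fr _; rewrite lee_fin (le_trans (ler_norm r)) // ltW.
have [u [v [beta [gam [u_dual u_norm v_bidual beta_ge0 sep]]]]] := epigraph_box_separation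
  Keps_gt0 eps_gt0 eps_gt0 eps_gt0 f_proper f_convex is_dual0 zs_dual box_free.
have [ys0 [yss0 [B0 [ys0_dual yss0_bidual base]]]] := lsc_epi_halfspace f_proper f_convex f_lsc.
have sep_halfspace : epi_halfspace f0 ((-1) *: u + (- gam) *: zs) ((-1) *: v) beta (-1 - gam * zss zs).
  move=> x phi a phi_dual fa; have := sep _ _ _ phi_dual fa.
  by rewrite !fct_addE !fct_scalerE !subr0; lra.
have := fbiconj_le0_halfspace f0 (proj1 f_proper) zss_bidual f_biconj ys0_dual yss0_bidual base
  (is_dual_comb _ u_dual (is_dualZ _ zs_dual)) (is_bidualZ _ v_bidual) beta_ge0 sep_halfspace.
rewrite bidual_comb ?bidualZ //; last exact: is_dualZ.
by have := bidual_lt1 zss_bidual u_dual eps_gt0 u_norm; lra.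
Qed.
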